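(* Let $C$ be an $A$-code of length $l$ having a basis of divisors consisting of one element. Then $C$ is isodual if and only if $l\le 2$ and either $C$ is self-dual ($C=C^\perp$) or $C=C^{\perp R}$.
   Context: Let $\mathbb{F}$ be a finite field, $f(x)\in\mathbb{F}[x]$ monic of degree $m$, $A=\mathbb{F}[x]/\langle f(x)\rangle$. An $A$-code of length $l$ is an $A$-submodule of $A^l$; $C^\perp=\{a\in A^l:\sum_ia_ic_i=0\ \forall c\in C\}$ and $C^{\perp R}=\{(c_l,\ldots,c_1):(c_1,\ldots,c_l)\in C^\perp\}$. $C$ is isodual if $C^\perp$ is the image of $C$ under some permutation of coordinates. For $u\in A^l$, $L_{\mathrm{ind}}(u)$ is the smallest index of a nonzero entry and $L_{\mathrm{coef}}(u)$ that entry. For nonzero $C$, $L_{\mathrm{ind}}(C)=\min_{u\in C}L_{\mathrm{ind}}(u)$; $L_{\mathrm{coef}}(C)$ is the monic polynomial $g$ of minimum degree such that some $c\in C$ has $L_{\mathrm{ind}}(c)=L_{\mathrm{ind}}(C)$ and $L_{\mathrm{coef}}(c)=g$ (such $c$ is a leading element). $C^{(1)}=C$, $C^{(n+1)}=\{c\in C^{(n)}:L_{\mathrm{ind}}(c)>L_{\mathrm{ind}}(C^{(n)})\}$ while $C^{(n)}\ne0$; with $k$ largest such that $C^{(k)}\ne0$, a tuple $(g^{(1)},\dots,g^{(k)})$ with $g^{(j)}$ a leading element of $C^{(j)}$ is a basis of divisors. *)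

From HB Require Import structures.
From mathcomp Require Import all_boot all_order all_algebra all_fingroup.
Set Implicit Arguments. Unset Strict Implicit. Unset Printing Implicit Defensive.
Import GRing.Theory.
Local Open Scope ring_scope.

(* A = F[x]/<f> is modelled by mathcomp's {poly %/ f} (qpoly.v), which is the
   quotient ring F[x]/<f> whenever f is monic with size f > 1 (deg f >= 1).
   Words of A^l are row vectors 'rV[A]_l; coordinates are 0-based. *)

Section Codes.
Variables (F : finFieldType) (f : {poly F}) (l : nat).
Local Notation A := {poly %/ f}.
Local Notation word := 'rV[A]_l.

Definition is_Acode (C : {set word}) : Prop :=
  [/\ (0 : word) \in C,
      (forall u v, u \in C -> v \in C -> u + v \in C) &
      (forall (a : A) u, u \in C -> a *: u \in C)].

(* L_ind(u): smallest (0-based) index of a nonzero entry; l if u = 0 *)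
Definition Lind (u : word) : nat :=
  \big[minn/l]_(i < l | u ord0 i != 0) (i : nat).

Definition LindC (C : {set word}) : nat := \big[minn/l]_(c in C) Lind c.

(* C^(n+1) = { c in C^(n) : L_ind(c) > L_ind(C^(n)) }  (0 has L_ind = l, so
   it stays in while C^(n) is nonzero) *)
Definition Cnext (C : {set word}) : {set word} :=
  [set c in C | LindC C < Lind c]%N.

(* Cseq C n = C^(n), for n >= 1 *)
Definition Cseq (C : {set word}) (n : nat) : {set word} := iter n.-1 Cnext C.

Definition has_one_element_basis (C : {set word}) : Prop :=
  Cseq C 1 != [set 0] /\ Cseq C 2 = [set 0].

Definition dual (C : {set word}) : {set word} :=
  [set a : word | [forall c in C, \sum_(i < l) a ord0 i * c ord0 i == 0]].

Definition rev_word (u : word) : word := \row_(i < l) u ord0 (rev_ord i).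

Definition dualR (C : {set word}) : {set word} := [set rev_word a | a in dual C].

Definition perm_word (s : 'S_l) (u : word) : word := \row_(i < l) u ord0 (s i).

Definition isodual (C : {set word}) : Prop :=
  exists s : 'S_l, dual C = [set perm_word s c | c in C].

End Codes.

From HB Require Import structures.
From mathcomp Require Import all_boot all_order all_algebra all_fingroup.
Set Implicit Arguments. Unset Strict Implicit. Unset Printing Implicit Defensive.
Import Order.TTheory GRing.Theory.
Local Open Scope ring_scope.

(* With a one-element basis of divisors every nonzero codeword has its leading
   entry at the same index k, so c |-> c_k is an injective A-linear map from C
   into A.  Euclidean division in A = F[x]/<f> then shows that C is generated
   by a single word v, whence C^perp contains the kernel of w |-> sum_i w_i v_i,
   of size at least |A|^(l-1).  If C is isodual, |A|^(l-1) <= |C^perp| = |C|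
   <= |A|, hence l <= 2; on at most two coordinates a permutation is the
   identity or the reversal, which gives C = C^perp or C = C^perpR. *)

Lemma card_le_mul_card_kernel (U V : finZmodType) (phi : U -> V) :
  zmod_morphism phi -> (#|U| <= #|V| * #|[set u | phi u == 0%R]|)%N.
Proof.
move=> phiB; pose rep (y : V) := odflt 0 [pick u | phi u == y].
have repP x : phi (rep (phi x)) = phi x.
  by rewrite /rep; case: pickP => [u /eqP //|/(_ x)]; rewrite eqxx.
pose h x := (phi x, x - rep (phi x)).
have h_inj : injective h.
  move=> x y [Exy /eqP]; rewrite Exy (can2_eq (subrK _) (addrK _)) subrK.
  by move/eqP.
rewrite -[#|V|]cardsT -cardsX -(card_imset _ h_inj); apply: subset_leq_card.
by apply/subsetP => _ /imsetP[x _ ->]; rewrite !inE /= phiB repP subrr.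
Qed.

Definition rev_perm (l : nat) : 'S_l := perm (@rev_ord_inj l).

Lemma perm_le2 (l : nat) (s : 'S_l) : (l <= 2)%N -> s = 1%g \/ s = rev_perm l.
Proof.
case: l s => [|[|[|//]]] s _.
- by left; apply/permP => -[].
- by left; apply/permP => i; rewrite !ord1.
have ord2 (j : 'I_2) : j = ord0 \/ j = ord_max.
  by case: j => [[|[|//]]] ?; [left|right]; apply/val_inj.
have s01 : s ord0 != s ord_max by rewrite (inj_eq perm_inj).
case: (ord2 (s ord0)) => s0; [left | right]; apply/permP => i;
  rewrite ?perm1 ?permE; case: (ord2 i) => ->; rewrite ?s0 //;
  case: (ord2 (s ord_max)) => s1; rewrite s1 // in s01 *;
  by [rewrite s0 in s01 | apply/val_inj].
Qed.

Section Words.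
Variables (F : finFieldType) (f : {poly F}) (l : nat).
Local Notation A := {poly %/ f}.
Local Notation word := 'rV[A]_l.

Lemma Lind_le (u : word) (j : 'I_l) : u ord0 j != 0 -> (Lind u <= j)%N.
Proof. by move=> uj; rewrite /Lind -minEnat -leEnat bigmin_le_cond. Qed.

Lemma Lind_lt (u : word) : u != 0 -> (Lind u < l)%N.
Proof.
move=> /eqP u_nz; have [j uj] : exists j, u ord0 j != 0.
  by apply/existsP; apply: contra_notT u_nz => /existsPn u0; apply/rowP => j;
     rewrite mxE; apply/eqP/negbNE.
exact: leq_ltn_trans (Lind_le uj) (ltn_ord j).
Qed.

Lemma nz_Lind (u : word) (j : 'I_l) : Lind u = j -> u ord0 j != 0.
Proof.
rewrite /Lind -minEnat.
have [i ui | u0] := pickP (fun i => u ord0 i != 0); last first.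
  rewrite bigmin_eq_id => [Elj | i]; last by rewrite u0.
  by move: (ltn_ord j); rewrite -Elj ltnn.
have [i0 ui0 ->] := eq_bigmin i (fun i => u ord0 i != 0)
  (fun i : 'I_l => i : nat) ui (fun i _ => ltnW (ltn_ord i)).
by move=> /val_inj <-.
Qed.

Lemma LindC_le (C : {set word}) (c : word) : c \in C -> (LindC C <= Lind c)%N.
Proof. by move=> cC; rewrite /LindC -minEnat -leEnat bigmin_le_cond. Qed.

Lemma perm_word1 (u : word) : perm_word 1%g u = u.
Proof. by apply/rowP => i; rewrite mxE perm1. Qed.

Lemma perm_word_rev (u : word) : perm_word (rev_perm l) u = rev_word u.
Proof. by apply/rowP => i; rewrite !mxE permE. Qed.

Lemma perm_word_inj (s : 'S_l) : injective (@perm_word F f l s).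
Proof.
apply: (can_inj (g := @perm_word F f l s^-1)) => u.
by apply/rowP => i; rewrite !mxE permKV.
Qed.

Lemma rev_wordK : involutive (@rev_word F f l).
Proof. by move=> u; apply/rowP => i; rewrite !mxE rev_ordK. Qed.

Lemma rev_word_imsetK (X : {set word}) :
  @rev_word F f l @: (@rev_word F f l @: X) = X.
Proof. by rewrite -imset_comp (eq_imset _ rev_wordK) imset_id. Qed.

Lemma dualR_eqE (C : {set word}) :
  C = dualR C <-> dual C = @rev_word F f l @: C.
Proof.
rewrite /dualR; split=> E; first by rewrite {2}E rev_word_imsetK.
by rewrite E rev_word_imsetK.
Qed.

End Words.

Lemma val_qpoly_sub_divpM (K : fieldType) (h : {poly K}) (p g : {poly %/ h}) :
  p - in_qpoly h (p %/ g) * g = p %% g :> {poly K}.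
Proof.
rewrite raddfB /= Pdiv.RingMonic.rmodp_mulml ?monic_mk_monic //.
have -> : p %/ g * g = (p : {poly K}) - p %% g.
  by rewrite {2}(divp_eq (p : {poly K}) g) addrK.
rewrite Pdiv.CommonRing.rmodp_small; first by rewrite opprB addrCA subrr addr0.
apply: leq_ltn_trans (size_polyD _ _) _; rewrite size_polyN gtn_max.
by rewrite size_mk_monic (leq_ltn_trans (leq_modp _ _)) ?size_mk_monic.
Qed.

Section Codes.
Variables (F : finFieldType) (f : {poly F}) (l : nat).
Variable C : {set 'rV[{poly %/ f}]_l}.
Local Notation A := {poly %/ f}.
Local Notation word := 'rV[A]_l.

Lemma card_dual_principal (v : word) :
  {in C, forall c, exists a : A, c = a *: v} ->
  (#|A| ^ l <= #|A| * #|dual C|)%N.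
Proof.
move=> Cv; pose phi (w : word) := \sum_i w ord0 i * v ord0 i.
have phiB : zmod_morphism phi.
  move=> x y; rewrite /phi -sumrB.
  by apply: eq_bigr => i _; rewrite !mxE mulrBl.
have card_word : #|{: word}| = (#|A| ^ l)%N by rewrite card_mx mul1n.
rewrite -card_word; apply: leq_trans (card_le_mul_card_kernel phiB) _.
rewrite leq_mul2l subset_leq_card ?orbT //; apply/subsetP => w.
rewrite !inE => /eqP phi_w0; apply/forall_inP => c /Cv[a ->].
rewrite (eq_bigr (fun i => a * (w ord0 i * v ord0 i))) => [|i _].
  by rewrite -mulr_sumr -/(phi w) phi_w0 mulr0.
by rewrite mxE mulrCA.
Qed.

Lemma isodual_card : isodual C -> #|dual C| = #|C|.
Proof. by move=> [s ->]; rewrite card_imset //; apply: perm_word_inj. Qed.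

Hypothesis C_code : is_Acode C.

Lemma Acode_subr (u v : word) : u \in C -> v \in C -> u - v \in C.
Proof.
by case: C_code => _ CD CZ uC vC; rewrite -scaleN1r; apply/CD/CZ.
Qed.

Section Pivot.
Variable k : 'I_l.
Hypothesis pivot : {in C, forall c : word, c ord0 k = 0 -> c = 0}.

Lemma card_Acode_pivot : (#|C| <= #|A|)%N.
Proof.
have inj : {in C &, injective (fun c : word => c ord0 k)}.
  move=> c d cC dC cd; apply/eqP; rewrite -subr_eq0; apply/eqP/pivot.
    exact: Acode_subr.
  by rewrite !mxE cd subrr.
by rewrite -(card_in_imset inj) max_card.
Qed.

(* A generator: a nonzero codeword whose pivot entry has least degree. *)
Lemma Acode_principal :
  exists v : word, {in C, forall c, exists a : A, c = a *: v}.
Proof.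
pose P c := (c \in C) && (c != 0).
have [c0 Pc0 | C0] := pickP P; last first.
  exists 0 => c cC; exists 0; rewrite scale0r; apply/eqP.
  by have := C0 c; rewrite /P cC => /negbFE.
case: (arg_minnP (fun c : word => size (c ord0 k : {poly F})) Pc0).
move=> v /andP[vC v_nz] vmin; exists v => c cC.
have vk_nz : (v ord0 k : {poly F}) != 0.
  by apply: contra v_nz => /eqP vk0; apply/eqP/pivot => //; apply/val_inj.
exists (in_qpoly f (c ord0 k %/ v ord0 k)); apply/eqP; rewrite -subr_eq0.
set d := c - _ *: v; apply: contraT => d_nz.
have dC : d \in C by apply: Acode_subr => //; case: C_code => _ _; apply.
have dk : (d ord0 k : {poly F}) = c ord0 k %% v ord0 k.
  by rewrite !mxE val_qpoly_sub_divpM.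
by have := vmin d; rewrite /P dC d_nz dk leqNgt ltn_modp vk_nz => /(_ isT).
Qed.

End Pivot.

Hypothesis C_basis : has_one_element_basis C.

Lemma one_basis_nz : exists2 c, c \in C & c != 0.
Proof.
case: C_basis => /eqP C_nz _; case: C_code => C0 _ _.
apply/exists_inP; apply: contra_notT C_nz => /exists_inPn Cz.
apply/setP => c; rewrite in_set1.
by apply/idP/eqP => [cC | ->] //; apply/eqP/negbNE/Cz.
Qed.

Lemma one_basis_Lind (c : word) : c \in C -> c != 0 -> Lind c = LindC C.
Proof.
move=> cC c_nz; apply/eqP; rewrite eqn_leq LindC_le // andbT.
have : c \notin Cnext C.
  by case: C_basis => _; rewrite /Cseq /= => ->; rewrite in_set1.
by rewrite inE cC -leqNgt.
Qed.

Lemma one_basis_pivot :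
  exists k : 'I_l, {in C, forall c : word, c ord0 k = 0 -> c = 0}.
Proof.
have [c0 c0C c0_nz] := one_basis_nz.
exists (Ordinal (Lind_lt c0_nz)) => c cC ck0.
apply/eqP; apply: contraT => c_nz.
have Lc : Lind c = Ordinal (Lind_lt c0_nz).
  by rewrite /= (one_basis_Lind cC c_nz) (one_basis_Lind c0C c0_nz).
by move: (nz_Lind Lc); rewrite ck0 eqxx.
Qed.

Lemma one_basis_isodual_le2 : isodual C -> (l <= 2)%N.
Proof.
move=> C_iso; have [k pivot] := one_basis_pivot.
have [v Cv] := Acode_principal pivot.
have A_gt1 : (1 < #|A|)%N.
  have := max_card (mem [set (0 : A); (1 : A)]).
  by rewrite cards2 eq_sym oner_eq0.
rewrite -(leq_exp2l _ _ A_gt1) expnS expn1.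
apply: leq_trans (card_dual_principal Cv) _.
by rewrite leq_mul2l isodual_card // (card_Acode_pivot pivot) orbT.
Qed.

End Codes.

Theorem mainTheorem5 (F : finFieldType) (f : {poly F}) (l : nat)
    (C : {set 'rV[{poly %/ f}]_l}) :
  f \is monic -> (1 < size f)%N ->
  is_Acode C -> has_one_element_basis C ->
  (isodual C <-> (l <= 2)%N /\ (C = dual C \/ C = dualR C)).
Proof.
(* {poly %/ f} is built on mk_monic f. *)
move=> _ _ C_code C_basis; split=> [[s Es] | [_ [E | E]]].
- have l_le2 := one_basis_isodual_le2 C_code C_basis (ex_intro _ s Es).
  split=> //; case: (perm_le2 s l_le2) => s_def; rewrite s_def in Es.
  + by left; rewrite Es (eq_imset _ (@perm_word1 _ _ _)) imset_id.
  + by right; apply/dualR_eqE; rewrite Es (eq_imset _ (@perm_word_rev _ _ _)).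
- by exists 1%g; rewrite -E (eq_imset _ (@perm_word1 _ _ _)) imset_id.
- exists (rev_perm l); rewrite (eq_imset _ (@perm_word_rev _ _ _)).
  exact/dualR_eqE.
Qed.
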